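(* Let $\mathcal{X}=\mathbb{R}^N$, let $Q\ge 1$ be an integer, and let $h:\mathcal{X}\times\mathcal{X}\to\mathbb{R}_+$ be a (conditionally) negative definite kernel, with $d$ the distance it induces on measures via $d(\eta_1,\eta_2)^2 = -\frac{1}{2}\int_\mathcal{X}\int_\mathcal{X} h(x,y)\,(\eta_1-\eta_2)(dx)\,(\eta_1-\eta_2)(dy)$ for signed measures $\eta_1,\eta_2$ of equal total mass. Let $\eta$ be a signed measure on $\mathcal{X}$ of finite total variation which belongs to the Hilbert space embedding associated with $h$ (i.e., to the reproducing kernel Hilbert space of the kernel $k_{z_0}(x,y)=\frac{h(x,z_0)+h(y,z_0)-h(x,y)}{2}$, $z_0\in\mathcal{X}$ fixed, via the embedding $\mu\mapsto\int k_{z_0}(x,\cdot)\,\mu(dx)$), and such that $\int\eta(dx)>0$. Suppose: 1. $h(\cdot,\cdot)$ is continuous on $\mathcal{X}\times\mathcal{X}$; 2. there exists a positive (definite) kernel $k$ associated to $h$, in the sense that $h(x,y)=k(x,x)+k(y,y)-2k(x,y)$ for all $x,y\in\mathcal{X}$, such that $\lim_{x\to\infty}k(x,x)=\infty$ and, for every $y\in\mathcal{X}$, there exists $b_y<\infty$ with $|k(x,y)|\le b_y$ for all $x\in\mathcal{X}$; 3. there exists a constant $C_L$ such that $k(x,y)\ge C_L$ for all $x,y\in\mathcal{X}$. Then, writing $\delta_{\alpha,X}:=\sum_{q=1}^Q\alpha_q\delta_{x_q}$, the minimization problem $$\inf_{X=(x_q)_{q=1}^Q\in\mathcal{X}^Q,\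 \alpha=(\alpha_q)_{q=1}^Q\in(\mathbb{R}_+)^Q,\ \sum_q\alpha_q=\int\eta(dx)} d\left(\delta_{\alpha,X},\eta\right)^2$$ admits at least one solution $\alpha^\star\in(\mathbb{R}_+)^Q$, $X^\star\in\mathcal{X}^Q$.
   Context: Measures are finite total variation signed measures on $\mathcal{X}=\mathbb{R}^N$; $\delta_x$ denotes the Dirac mass at $x$. The kernel $k$ induces a Hilbert space structure on measures with $\langle\delta_x,\delta_y\rangle=k(x,y)$ and $\|\eta_1-\eta_2\|=d(\eta_1,\eta_2)$. *)

From HB Require Import structures.
From mathcomp Require Import all_boot all_order all_algebra.
From mathcomp Require Import all_classical all_reals all_analysis.
Set Implicit Arguments. Unset Strict Implicit. Unset Printing Implicit Defensive.
Import Order.TTheory GRing.Theory Num.Theory.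
Import numFieldNormedType.Exports.
Local Open Scope classical_set_scope.
Local Open Scope ring_scope.

Definition BorelRN (R : realType) (N : nat) :=
  g_sigma_algebraType (@open 'rV[R]_N).

Definition pos_def_kernel (T : Type) (R : realType) (k : T -> T -> R) : Prop :=
  (forall x y, k x y = k y x) /\
  forall (n : nat) (c : 'I_n -> R) (x : 'I_n -> T),
    0 <= \sum_(i < n) \sum_(j < n) c i * c j * k (x i) (x j).

Definition cond_neg_def_kernel (T : Type) (R : realType) (h : T -> T -> R) : Prop :=
  (forall x y, h x y = h y x) /\
  forall (n : nat) (c : 'I_n -> R) (x : 'I_n -> T),
    \sum_(i < n) c i = 0 ->
    \sum_(i < n) \sum_(j < n) c i * c j * h (x i) (x j) <= 0.

Definition kz0 (T : Type) (R : realType) (h : T -> T -> R) (z0 : T) (x y : T) : R :=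
  (h x z0 + h y z0 - h x y) / 2.

Section SignedIntegrals.
Context (R : realType) (N : nat).
Local Notation X := (BorelRN R N).

(* A finite signed measure eta is represented by its Jordan decomposition
   eta = Pp - Pn, with Pp, Pn finite (nonnegative) measures that are mutually
   singular.  Then |eta| = Pp + Pn. *)
Definition mutually_singular (Pp Pn : {measure set X -> \bar R}) : Prop :=
  exists A : set X, measurable A /\ Pp (~` A) = 0%E /\ Pn A = 0%E.

Definition sint (Pp Pn : {measure set X -> \bar R}) (f : X -> R) : R :=
  Rintegral Pp setT f - Rintegral Pn setT f.

Definition smass (Pp Pn : {measure set X -> \bar R}) : R :=
  fine (Pp setT) - fine (Pn setT).

Definition sint_diff (Q : nat) (a : 'I_Q -> R) (x : 'I_Q -> X)
    (Pp Pn : {measure set X -> \bar R}) (f : X -> R) : R :=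
  \sum_(q < Q) a q * f (x q) - sint Pp Pn f.

(* Squared distance d(delta_{alpha,X}, eta)^2 = || delta_{alpha,X} - eta ||^2
   in the Hilbert structure on measures induced by the kernel (RKHS of k_{z0}):
   the double integral of k_{z0} against (delta_{alpha,X} - eta)^{(x) 2}. *)
Definition dist2_diff (h : X -> X -> R) (z0 : X) (Q : nat) (a : 'I_Q -> R)
    (x : 'I_Q -> X) (Pp Pn : {measure set X -> \bar R}) : R :=
  sint_diff a x Pp Pn (fun y => sint_diff a x Pp Pn (fun x' => kz0 h z0 x' y)).

(* eta = Pp - Pn belongs to the Hilbert space embedding (RKHS of k_{z0}):
   the kernel mean embedding  int k_{z0}(x,.) eta(dx)  is (Bochner) well defined,
   i.e.  int sqrt(k_{z0}(x,x)) |eta|(dx) < oo. *)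
Definition in_embedding (h : X -> X -> R) (z0 : X)
    (Pp Pn : {measure set X -> \bar R}) : Prop :=
  (\int[Pp]_x (Num.sqrt (kz0 h z0 x x))%:E < +oo)%E /\
  (\int[Pn]_x (Num.sqrt (kz0 h z0 x x))%:E < +oo)%E.

End SignedIntegrals.

(* Write K := kz0 h z0 and let g(y) = \int K(x, y) eta(dx) be the kernel mean
   embedding of eta.  Then d(delta_{a,X}, eta)^2 is the energy
   E(a, X) = sum_{q,p} a_q a_p K(x_p, x_q) - 2 sum_q a_q g(x_q) plus a constant.
   Cauchy-Schwarz for the positive kernel K gives |g(y)| <= G sqrt(K(y, y)), so E
   is bounded below on the simplex and, along a minimizing sequence, each weighted
   atom a_q sqrt(K(x_q, x_q)) stays bounded.  Extract a subsequence along which the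
   weights converge.  Atoms of positive limit weight stay in a bounded set, since
   K(x, x) is coercive, so their locations converge as well.  The other atoms may
   escape to infinity, but the lower bound on K controls their cross terms and
   a_q g(x_q) -> 0 by dominated convergence, because every K(x, .) is bounded.
   Hence E is lower semicontinuous along the subsequence, and the limit
   configuration is a minimizer. *)

From HB Require Import structures.
From mathcomp Require Import all_boot all_order all_algebra.
From mathcomp Require Import all_classical all_reals all_analysis.
From mathcomp Require Import ring lra measurable_realfun.
Set Implicit Arguments. Unset Strict Implicit. Unset Printing Implicit Defensive.
Import Order.TTheory GRing.Theory Num.Theory.
Import numFieldNormedType.Exports.
Local Open Scope classical_set_scope.
Local Open Scope ring_scope.

Lemma increasing_seq_geq (f : nat -> nat) n : increasing_seq f -> (n <= f n)%N.
Proof.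
move=> /increasing_seqP f_incr; elim: n => [//|n IHn].
exact: leq_ltn_trans IHn (f_incr n).
Qed.

Lemma increasing_seq_comp (f g : nat -> nat) :
  increasing_seq f -> increasing_seq g -> increasing_seq (f \o g).
Proof. by move=> f_incr g_incr m n /=; rewrite f_incr; exact: g_incr. Qed.

Lemma cvg_increasing_comp {T : topologicalType} (u : nat -> T) (l : T) (f : nat -> nat) :
  increasing_seq f -> u n @[n --> \oo] --> l -> (u \o f) n @[n --> \oo] --> l.
Proof.
move=> f_incr ul; apply: cvg_comp ul => A [n0 _ A_n0].
by exists n0 => // n /= n0n; apply: A_n0; exact: leq_trans n0n (increasing_seq_geq n f_incr).
Qed.

Lemma cvg_sumr (R : realType) (I : Type) (r : seq I) (u : I -> nat -> R) (l : I -> R) :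
  (forall i, u i n @[n --> \oo] --> l i) ->
  \sum_(i <- r) u i n @[n --> \oo] --> \sum_(i <- r) l i.
Proof. by move=> ul; apply: cvg_big => //; exact: add_continuous. Qed.

Lemma finite_bolzano_weierstrass (R : realType) (I : finType) (u : I -> nat -> R) :
  (forall i, exists M, forall n, `|u i n| <= M) ->
  exists2 f : nat -> nat, increasing_seq f & forall i, cvgn (u i \o f).
Proof.
move=> u_bnd.
suff [f f_incr u_cvg] : exists2 f : nat -> nat, increasing_seq f &
    forall i, i \in enum I -> cvgn (u i \o f).
  by exists f => // i; apply: u_cvg; rewrite mem_enum.
elim: (enum I) => [|i s [f f_incr u_cvg]]; first by exists id.
have [M uiM] := u_bnd i.
have /bolzano_weierstrass[g g_incr uifg] : bounded_fun (u i \o f).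
  exists M; split; first exact: num_real.
  by move=> x Mx n _; apply: le_trans (uiM (f n)) _; exact: ltW.
exists (f \o g); first exact: increasing_seq_comp.
move=> j; rewrite in_cons => /predU1P[->//|js].
have /cvg_ex[l ujf] := u_cvg j js; apply/cvg_ex; exists l.
exact: (cvg_increasing_comp g_incr ujf).
Qed.

Lemma mx_entry_le_norm (R : realType) (m n : nat) (A : 'M[R]_(m, n)) i j :
  `|A i j| <= `|A|.
Proof.
rewrite [leRHS]/Num.Def.normr /= mx_normrE.
exact: (le_bigmax 0 (fun ij : 'I_m * 'I_n => `|A ij.1 ij.2|) (i, j)).
Qed.

Lemma cvg_mx_entrywise (R : realType) (m n : nat) {T : Type} (F : set_system T)
    {FF : Filter F} (A : T -> 'M[R]_(m, n)) (L : 'M[R]_(m, n)) :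
  (forall i j, A t i j @[t --> F] --> L i j) -> A t @[t --> F] --> L.
Proof.
move=> AL; apply/cvgrPdist_lt => e e0.
have : \forall t \near F, forall i j, `|L i j - A t i j| < e.
  by do 2 apply: filter_forall => ?; exact: (cvgrPdist_lt _ _).1 (AL _ _) e e0.
apply: filterS => t ALe; rewrite [X in X < _]/Num.Def.normr /= mx_normrE.
by apply: bigmax_lt => // -[i j] _ /=; rewrite !mxE; exact: ALe.
Qed.

Lemma sequentially_continuous (R : realType) (V : normedModType R) (f : V -> R) (p : V) :
  (forall u : nat -> V, u n @[n --> \oo] --> p -> f (u n) @[n --> \oo] --> f p) ->
  {for p, continuous f}.
Proof.
move=> f_seq; apply: contrapT => f_discont.
have [e [e0 far]] : exists e : R, 0 < e /\ forall n : nat, exists y,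
    `|p - y| < n.+1%:R^-1 /\ e <= `|f p - f y|.
  apply: contrapT => near_close; apply: f_discont.
  apply/(@cvgrPdist_lt _ _ _ _ (nbhs_filter p)) => e e0.
  apply: contrapT => not_near; apply: near_close; exists e; split => // n.
  apply: contrapT => none; apply: not_near.
  apply/nbhs_ballP; exists n.+1%:R^-1; first by rewrite /= invr_gt0 ltr0n.
  move=> y; rewrite -ball_normE /= => py; rewrite ltNge; apply/negP => fy.
  by apply: none; exists y.
have [u uP] := choice far.
have up : u n @[n --> \oo] --> p.
  apply/cvgrPdist_lt => d d0; near=> n; apply: lt_le_trans (uP n).1 _.
  rewrite -[leRHS]invrK lef_pV2 ?posrE ?invr_gt0 ?ltr0n //.
  have dn : d^-1 <= n%:R by near: n; exact: nbhs_infty_ger.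
  by apply: le_trans dn _; rewrite ler_nat.
have [n0 _ n0P] := (cvgrPdist_lt _ _).1 (f_seq u up) e e0.
by have := n0P n0 (leqnn n0); rewrite ltNge (uP n0).2.
Unshelve. all: end_near.
Qed.

Lemma continuous_measurable_BorelRN (R : realType) (N : nat) (f : 'rV[R]_N -> R) :
  continuous f -> measurable_fun setT (f : BorelRN R N -> R).
Proof.
move=> /continuousP f_cont.
apply: (measurability _ (measurable_realfun.RGenOpens.measurableE R)).
move=> _ [_ [a [b ->]] <-]; apply: measurableI => //.
by apply: sub_sigma_algebra; apply: f_cont; exact: interval_open.
Qed.

Definition simplex (R : realType) (Q : nat) (m : R) : set ('I_Q -> R) :=
  [set a | (forall q, 0 <= a q) /\ \sum_(q < Q) a q = m].

Definition energy (T : Type) (R : realType) (K : T -> T -> R) (g : T -> R)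
    (Q : nat) (a : 'I_Q -> R) (x : 'I_Q -> T) : R :=
  \sum_(q < Q) \sum_(p < Q) a q * a p * K (x p) (x q) - 2 * \sum_(q < Q) a q * g (x q).

Lemma sum_sqr_sub_ge (R : realType) (Q : nat) (t : 'I_Q -> R) (G : R) q0 :
  (t q0 - G) ^+ 2 - Q%:R * G ^+ 2 <= \sum_q t q ^+ 2 - 2 * (G * \sum_q t q).
Proof.
have -> : \sum_q t q ^+ 2 - 2 * (G * \sum_q t q) = \sum_q (t q - G) ^+ 2 - \sum_(q < Q) G ^+ 2.
  rewrite -!sumrB mulr_sumr mulr_sumr -sumrB; apply: eq_bigr => q _.
  by rewrite sqrrB; ring.
rewrite sumr_const card_ord mulr_natl lerD2r (bigD1 q0) //= lerDl.
by apply: sumr_ge0 => q _; exact: sqr_ge0.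
Qed.

Lemma simplex_closed (R : realType) (Q : nat) (m : R) (A : nat -> 'I_Q -> R) (a : 'I_Q -> R) :
  (forall n, simplex m (A n)) -> (forall q, A n q @[n --> \oo] --> a q) -> simplex m a.
Proof.
move=> A_simplex Aa; split => [q|].
  by apply: cvgr_to_ge (Aa q) _; apply: nearW => n; have [] := A_simplex n.
have sumA : (fun n => \sum_q A n q) = fun=> m by apply: funext => n; have [] := A_simplex n.
have := @cvg_sumr R _ (index_enum 'I_Q) (fun q n => A n q) a Aa; rewrite sumA.
by move/(cvg_lim (@Rhausdorff R)) <-; rewrite lim_cst.
Qed.

Lemma cvg_le_inv_succ (R : realType) (u : nat -> R) (l c : R) :
  u n @[n --> \oo] --> l -> (forall n, u n <= c + n.+1%:R^-1) -> l <= c.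
Proof.
move=> ul u_le; apply/ler_addgt0Pr => e e0.
apply: (cvgr_to_le ul); near=> n; apply: le_trans (u_le n) _; rewrite lerD2l.
rewrite -[leRHS]invrK lef_pV2 ?posrE ?invr_gt0 ?ltr0n //.
have en : e^-1 <= n%:R by near: n; exact: nbhs_infty_ger.
by apply: le_trans en _; rewrite ler_nat.
Unshelve. all: end_near.
Qed.

Section energy_minimization.
Context (R : realType) (N Q : nat) (K : 'rV[R]_N -> 'rV[R]_N -> R) (g : 'rV[R]_N -> R).
Context (m C G : R).
Hypothesis Q_gt0 : (0 < Q)%N.
Hypothesis m_ge0 : 0 <= m.
Hypothesis K_diag_ge0 : forall x, 0 <= K x x.
Hypothesis C_le0 : C <= 0.
Hypothesis K_ge : forall x y, C <= K x y.
Hypothesis K_coercive : forall M, exists r, forall x, K x x <= M -> `|x| <= r.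
Hypothesis K_cvg : forall (u v : nat -> 'rV[R]_N) (a b : 'rV[R]_N),
  u n @[n --> \oo] --> a -> v n @[n --> \oo] --> b ->
  K (u n) (v n) @[n --> \oo] --> K a b.
Hypothesis g_le : forall y, `|g y| <= G * Num.sqrt (K y y).
Hypothesis g_cvg : forall (u : nat -> 'rV[R]_N) (y : 'rV[R]_N),
  u n @[n --> \oo] --> y -> g (u n) @[n --> \oo] --> g y.
Hypothesis g_vanish : forall (t : nat -> R) (u : nat -> 'rV[R]_N) (T : R),
  t n @[n --> \oo] --> 0 -> (forall n, 0 <= t n) ->
  (forall n, t n * Num.sqrt (K (u n) (u n)) <= T) -> t n * g (u n) @[n --> \oo] --> 0.

Local Notation sq x := (Num.sqrt (K x x)).
Local Notation E := (energy K g).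
Let L := C * m ^+ 2 - Q%:R * G ^+ 2.

Lemma quad_form_ge (a : 'I_Q -> R) (x : 'I_Q -> 'rV[R]_N) : simplex m a ->
  \sum_q (a q * sq (x q)) ^+ 2 + C * m ^+ 2 <= \sum_q \sum_p a q * a p * K (x p) (x q).
Proof.
move=> [a_ge0 <-].
have -> : C * (\sum_q a q) ^+ 2 = \sum_q \sum_p a q * a p * C.
  rewrite expr2 mulr_suml mulr_sumr; apply: eq_bigr => q _.
  by rewrite !mulr_sumr; apply: eq_bigr => p _; ring.
have diag q : (a q * sq (x q)) ^+ 2 = \sum_p (if p == q then (a q * sq (x q)) ^+ 2 else 0).
  by rewrite -big_mkcond big_pred1_eq.
under eq_bigr do rewrite diag.
rewrite -big_split; apply: ler_sum => q _; rewrite -big_split; apply: ler_sum => p _ /=.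
case: eqP => [->|_]; last by rewrite add0r ler_wpM2l ?mulr_ge0.
rewrite exprMn sqr_sqrtr // -expr2 -[leRHS]addr0 lerD //.
by rewrite mulrC mulr_le0_ge0 // sqr_ge0.
Qed.

Lemma energy_ge (a : 'I_Q -> R) (x : 'I_Q -> 'rV[R]_N) q0 : simplex m a ->
  (a q0 * sq (x q0) - G) ^+ 2 + L <= E a x.
Proof.
move=> am; have [a_ge0 _] := am.
have gx : \sum_q a q * g (x q) <= G * \sum_q a q * sq (x q).
  rewrite mulr_sumr; apply: ler_sum => q _; rewrite mulrCA ler_wpM2l //.
  exact: le_trans (ler_norm _) (g_le _).
have := sum_sqr_sub_ge (fun q => a q * sq (x q)) G q0.
have := quad_form_ge x am; rewrite /E /energy /L; lra.
Qed.

Lemma weighted_sqrt_le_of_energy_le (a : 'I_Q -> R) (x : 'I_Q -> 'rV[R]_N) (M : R) q :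
  simplex m a -> E a x <= M -> a q * sq (x q) <= G + 1 + (M - L).
Proof.
move=> am EM; have := energy_ge x q am.
set u := a q * sq (x q) - G => uE.
have -> : a q * sq (x q) = u + G by rewrite subrK.
have : u <= 1 + u ^+ 2.
  by have := sqr_ge0 u; have := sqr_ge0 (u - 1); rewrite sqrrB expr1n mulr1; lra.
lra.
Qed.

Lemma norm_le_of_weighted_sqrt_le (c T : R) : 0 < c ->
  exists r, forall (w : R) x, c <= w -> w * sq x <= T -> `|x| <= r.
Proof.
move=> c_gt0; have [r rP] := K_coercive ((T / c) ^+ 2).
exists r => w x cw wT; apply: rP.
have sq_le : sq x <= T / c.
  rewrite ler_pdivlMr // mulrC; apply: le_trans wT.
  by rewrite ler_wpM2r // sqrtr_ge0.
rewrite -[K x x]sqr_sqrtr // ler_sqr ?nnegrE ?sqrtr_ge0 //.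
exact: le_trans (sqrtr_ge0 _) sq_le.
Qed.

Lemma simplex_subseq (A : nat -> 'I_Q -> R) (X : nat -> 'I_Q -> 'rV[R]_N) (T : R) :
  (forall n, simplex m (A n)) -> (forall n q, A n q * sq (X n q) <= T) ->
  exists (psi : nat -> nat) (a : 'I_Q -> R) (x : 'I_Q -> 'rV[R]_N),
    [/\ increasing_seq psi, simplex m a,
    forall q, A (psi n) q @[n --> \oo] --> a q &
    forall q, 0 < a q -> X (psi n) q @[n --> \oo] --> x q].
Proof.
move=> A_simplex AT.
have A_bnd q : exists M, forall n, `|A n q| <= M.
  exists m => n; have [A_ge0 <-] := A_simplex n.
  by rewrite ger0_norm // (bigD1 q) //= lerDl; exact: sumr_ge0.
have [phi phi_incr A_cvg] := finite_bolzano_weierstrass A_bnd.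
pose a q := lim (A (phi n) q @[n --> \oo]).
have Aa q : A (phi n) q @[n --> \oo] --> a q := A_cvg q.
(* Points of positive limit weight are eventually bounded; the others are frozen at 0. *)
pose Y n q := if (a q / 2 <= A (phi n) q) && (0 < a q) then X (phi n) q else 0.
have Y_bnd (qj : 'I_Q * 'I_N) : exists M, forall n, `|Y n qj.1 ord0 qj.2| <= M.
  case: qj => q j /=; have [aq_gt0|aq_le0] := ltP 0 (a q); last first.
    by exists 0 => n; rewrite /Y ltNge aq_le0 andbF mxE normr0.
  have [r rP] := norm_le_of_weighted_sqrt_le T (divr_gt0 aq_gt0 (ltr0Sn _ 1)).
  exists `|r| => n; apply: le_trans (mx_entry_le_norm _ _ _) _.
  rewrite /Y aq_gt0 andbT; case: ifP => [aA|_]; last by rewrite normr0.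
  exact: le_trans (rP _ _ aA (AT _ q)) (ler_norm r).
have [phi2 phi2_incr Y_cvg] := finite_bolzano_weierstrass Y_bnd.
pose x q : 'rV[R]_N := \row_j lim (Y (phi2 n) q ord0 j @[n --> \oo]).
have Yx q : Y (phi2 n) q @[n --> \oo] --> x q.
  by apply: cvg_mx_entrywise => i j; rewrite (ord1 i) mxE; exact: (Y_cvg (q, j)).
have Aa2 q : A ((phi \o phi2) n) q @[n --> \oo] --> a q.
  exact: cvg_increasing_comp phi2_incr (Aa q).
exists (phi \o phi2), a, x; split => //.
- exact: increasing_seq_comp.
- by apply: simplex_closed Aa => n; exact: A_simplex.
- move=> q aq_gt0; apply: cvg_trans (Yx q); apply: near_eq_cvg; near=> n.
  rewrite /Y /= aq_gt0 andbT ifT //; apply: ltW; near: n.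
  apply: (cvgr_gt (a q) (Aa2 q)).
  by rewrite ltr_pdivrMr // ltr_pMr // ltr1n.
Unshelve. all: end_near.
Qed.

Section limit_configuration.
Variables (A : nat -> 'I_Q -> R) (X : nat -> 'I_Q -> 'rV[R]_N).
Variables (a : 'I_Q -> R) (x : 'I_Q -> 'rV[R]_N) (T : R).
Hypothesis A_ge0 : forall n q, 0 <= A n q.
Hypothesis a_ge0 : forall q, 0 <= a q.
Hypothesis Aa : forall q, A n q @[n --> \oo] --> a q.
Hypothesis Xx : forall q, 0 < a q -> X n q @[n --> \oo] --> x q.
Hypothesis AT : forall n q, A n q * sq (X n q) <= T.

Let a_eq0 q : ~~ (0 < a q) -> a q = 0.
Proof. by rewrite -leNgt => aq_le0; apply/le_anti; rewrite aq_le0 a_ge0. Qed.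

Lemma weighted_potential_cvg :
  \sum_q A n q * g (X n q) @[n --> \oo] --> \sum_q a q * g (x q).
Proof.
apply: cvg_sumr => q; have [aq_gt0|/negP/negP/a_eq0 aq0] := boolP (0 < a q).
  by apply: cvgM; [exact: Aa | exact: g_cvg (Xx aq_gt0)].
rewrite aq0 mul0r; apply: g_vanish (fun n => AT n q) => [|n]; last exact: A_ge0.
by rewrite -aq0; exact: Aa.
Qed.

(* Pairs involving a vanishing limit weight may escape to infinity: their
   kernel values are only bounded below by C, which suffices since their
   limit weight is 0. *)
Lemma quad_form_lsc : exists2 H : nat -> R,
  (forall n, H n <= \sum_q \sum_p A n q * A n p * K (X n p) (X n q)) &
  H n @[n --> \oo] --> \sum_q \sum_p a q * a p * K (x p) (x q).
Proof.
pose in_supp q p := (0 < a q) && (0 < a p).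
exists (fun n => \sum_q \sum_p A n q * A n p * (if in_supp q p then K (X n p) (X n q) else C)).
  move=> n; apply: ler_sum => q _; apply: ler_sum => p _; case: ifP => // _.
  by rewrite ler_wpM2l ?mulr_ge0.
have -> : \sum_q \sum_p a q * a p * K (x p) (x q) =
    \sum_q \sum_p a q * a p * (if in_supp q p then K (x p) (x q) else C).
  apply: eq_bigr => q _; apply: eq_bigr => p _; case: ifP => // /negbT.
  by case/nandP => /a_eq0 ->; rewrite ?mul0r ?mulr0 ?mul0r.
apply: cvg_sumr => q; apply: cvg_sumr => p; apply: cvgM; first exact: cvgM.
case: ifP => [/andP[aq_gt0 ap_gt0]|_]; last exact: cvg_cst.
exact: K_cvg (Xx ap_gt0) (Xx aq_gt0).
Qed.

Lemma energy_lsc : exists2 H : nat -> R,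
  (forall n, H n <= E (A n) (X n)) & H n @[n --> \oo] --> E a x.
Proof.
have [H H_le Hx] := quad_form_lsc.
exists (fun n => H n - 2 * \sum_q A n q * g (X n q)) => [n|].
  by rewrite lerD2r.
by apply: cvgB => //; apply: cvgM; [exact: cvg_cst | exact: weighted_potential_cvg].
Qed.

End limit_configuration.

Lemma energy_minimizing_seq :
  exists (I : R) (A : nat -> 'I_Q -> R) (X : nat -> 'I_Q -> 'rV[R]_N),
  [/\ forall (b : 'I_Q -> R) (y : 'I_Q -> 'rV[R]_N), simplex m b -> I <= E b y,
       forall n, simplex m (A n) &
       forall n, E (A n) (X n) < I + n.+1%:R^-1].
Proof.
pose S := [set r | exists (a : 'I_Q -> R) (x : 'I_Q -> 'rV[R]_N), simplex m a /\ r = E a x].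
have S_lb : has_lbound S.
  exists L => _ [a [x [am ->]]]; have := energy_ge x (Ordinal Q_gt0) am.
  by have := sqr_ge0 (a (Ordinal Q_gt0) * sq (x (Ordinal Q_gt0)) - G); lra.
have S_ne : S !=set0.
  pose q0 := Ordinal Q_gt0; pose a q := if q == q0 then m else 0.
  exists (E a (fun=> 0)), a, (fun=> 0); split => //; split => [q|].
    by rewrite /a; case: eqP.
  by rewrite (bigD1 q0) //= /a eqxx big1 ?addr0 // => q /negbTE ->.
have near_inf n : exists p : ('I_Q -> R) * ('I_Q -> 'rV[R]_N),
    simplex m p.1 /\ E p.1 p.2 < inf S + n.+1%:R^-1.
  have e_gt0 : 0 < n.+1%:R^-1 :> R by rewrite invr_gt0.
  have [_ [a [x [am ->]]] ax] := inf_adherent e_gt0 (conj S_ne S_lb).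
  by exists (a, x).
have [ps ps_inf] := choice near_inf.
exists (inf S), (fun n => (ps n).1), (fun n => (ps n).2); split.
- by move=> b y bm; apply: ge_inf => //; exists b, y.
- by move=> n; have [] := ps_inf n.
- by move=> n; have [] := ps_inf n.
Qed.

Theorem energy_attains_min : exists (a : 'I_Q -> R) (x : 'I_Q -> 'rV[R]_N),
  simplex m a /\
  forall (b : 'I_Q -> R) (y : 'I_Q -> 'rV[R]_N), simplex m b -> E a x <= E b y.
Proof.
have [I [A [X [I_le A_simplex AE]]]] := energy_minimizing_seq.
have AT n q : A n q * sq (X n q) <= G + 1 + (I + 1 - L).
  apply: weighted_sqrt_le_of_energy_le (A_simplex n) _; apply/ltW/(lt_le_trans (AE n)).
  by rewrite lerD2l invf_le1 ?ler1n ?ltr0n.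
have [psi [a [x [psi_incr am Aa Xx]]]] := simplex_subseq A_simplex AT.
have [H H_le Ha] := energy_lsc (fun n q => (A_simplex (psi n)).1 q) am.1 Aa Xx
  (fun n => AT (psi n)).
exists a, x; split => // b y bm; apply: le_trans (I_le b y bm).
apply: cvg_le_inv_succ Ha _ => n; apply: le_trans (H_le n) _.
apply/ltW/(lt_le_trans (AE _)).
by rewrite lerD2l lef_pV2 ?posrE ?ltr0n // ler_nat ltnS increasing_seq_geq.
Qed.

End energy_minimization.

Lemma kernel_Cauchy_Schwarz (T : Type) (R : realType) (K : T -> T -> R) :
  (forall c1 c2 x y, 0 <= c1 ^+ 2 * K x x + 2 * c1 * c2 * K x y + c2 ^+ 2 * K y y) ->
  forall x y, `|K x y| <= Num.sqrt (K x x) * Num.sqrt (K y y).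
Proof.
move=> K_psd x y.
have := K_psd 1 0 x y; have := K_psd 0 1 x y; have := K_psd (K x y) (- K x x) x y.
have := K_psd (- K y y) (K x y) x y; have := K_psd 1 (- K x y) x y.
set A := K x x; set B := K x y; set D := K y y; rewrite !expr2 => H1 H2 H3 H4 H5.
have A_ge0 : 0 <= A by lra.
have D_ge0 : 0 <= D by lra.
rewrite -sqrtr_sqr -sqrtrM // ler_sqrt ?mulr_ge0 //.
have [A_gt0|A_le0] := ltP 0 A; first by nra.
have [D_gt0|D_le0] := ltP 0 D; nra.
Qed.

Section kz0_algebra.
Context (T : Type) (R : realType) (h k : T -> T -> R) (z0 : T).
Hypothesis k_pd : pos_def_kernel k.
Hypothesis hk : forall x y, h x y = k x x + k y y - 2 * k x y.
Local Notation K := (kz0 h z0).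

Let kC x y : k x y = k y x.
Proof. by case: k_pd. Qed.

Lemma kz0E x y : K x y = k x y - k x z0 - k y z0 + k z0 z0.
Proof. by rewrite /kz0 !hk; lra. Qed.

Lemma kz0C x y : K x y = K y x.
Proof. by rewrite !kz0E kC; lra. Qed.

(* Positivity of k on the three points x, y, z0 with weights c1, c2, -(c1 + c2). *)
Lemma kz0_quad_ge0 c1 c2 x y :
  0 <= c1 ^+ 2 * K x x + 2 * c1 * c2 * K x y + c2 ^+ 2 * K y y.
Proof.
have [_ /(_ 3 (fun i => nth 0 [:: c1; c2; -(c1 + c2)] i)
  (fun i => nth z0 [:: x; y; z0] i))] := k_pd.
rewrite !big_ord_recr !big_ord0 /= !add0r !kz0E (kC y x) (kC z0 x) (kC z0 y).
by move=> /le_trans; apply; rewrite le_eqVlt; apply/orP; left; apply/eqP; ring.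
Qed.

Lemma kz0_diag_ge0 x : 0 <= K x x.
Proof. by have := kz0_quad_ge0 1 0 x x; rewrite !expr2; lra. Qed.

Lemma kz0_Cauchy_Schwarz x y : `|K x y| <= Num.sqrt (K x x) * Num.sqrt (K y y).
Proof. exact: kernel_Cauchy_Schwarz kz0_quad_ge0 x y. Qed.

Lemma kz0_lbound : (exists CL, forall x y, CL <= k x y) ->
  (exists b, forall x, `|k x z0| <= b) -> exists C, C <= 0 /\ forall x y, C <= K x y.
Proof.
move=> [CL k_ge] [b k_le]; exists (Num.min 0 (2 * CL - 2 * b)).
split => [|x y]; first by rewrite ge_min lexx.
have := k_le x; have := k_le y; have := k_ge x y; have := k_ge z0 z0.
rewrite kz0E ge_min !ler_norml => ? ? /andP[? ?] /andP[? ?]; apply/orP; right; lra.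
Qed.

Lemma kz0_row_bounded : (forall y, exists b, forall x, `|k x y| <= b) ->
  forall x, exists b, forall y, `|K x y| <= b.
Proof.
move=> k_bnd x; have [b k_le] := k_bnd z0; have [bx kx_le] := k_bnd x.
exists (bx + 2 * b + `|k z0 z0|) => y; rewrite kz0E (kC x y).
have := k_le x; have := k_le y; have := kx_le y; have := ler_norm (k z0 z0).
have := ler_norm (- k z0 z0); rewrite normrN.
by rewrite !ler_norml => ? ? /andP[? ?] /andP[? ?] /andP[? ?]; apply/andP; split; lra.
Qed.

End kz0_algebra.

Section kz0_analysis.
Context (R : realType) (N : nat) (h k : 'rV[R]_N -> 'rV[R]_N -> R) (z0 : 'rV[R]_N).
Hypothesis hk : forall x y, h x y = k x x + k y y - 2 * k x y.
Local Notation K := (kz0 h z0).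

Lemma kz0_coercive : (exists b, forall x, `|k x z0| <= b) ->
  (forall M, exists r, forall x, r < `|x| -> M < k x x) ->
  forall M, exists r, forall x, K x x <= M -> `|x| <= r.
Proof.
move=> [b k_le] k_coer M.
have [r r_coer] := k_coer (M + 2 * b + `|k z0 z0|).
exists r => x KM; rewrite leNgt; apply/negP => /r_coer kx_big.
have := k_le x; have := ler_norm (- k z0 z0); rewrite normrN.
move: KM; rewrite /kz0 !hk ler_norml => ? ? /andP[? ?]; lra.
Qed.

Lemma kz0_cvg : continuous (fun p : 'rV[R]_N * 'rV[R]_N => h p.1 p.2) ->
  forall (u v : nat -> 'rV[R]_N) (a b : 'rV[R]_N),
  u n @[n --> \oo] --> a -> v n @[n --> \oo] --> b ->
  K (u n) (v n) @[n --> \oo] --> K a b.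
Proof.
move=> h_cont u v a b ua vb.
have h_cvg (u' v' : nat -> 'rV[R]_N) a' b' : u' n @[n --> \oo] --> a' ->
    v' n @[n --> \oo] --> b' -> h (u' n) (v' n) @[n --> \oo] --> h a' b'.
  by move=> ua' vb'; exact: (cvg_comp2 ua' vb' (@h_cont (a', b'))).
rewrite /kz0; apply: cvgM; last exact: cvg_cst.
by apply: cvgB; [apply: cvgD|]; apply: h_cvg => //; exact: cvg_cst.
Qed.

End kz0_analysis.

Section Rintegral_lemmas.
Context d (T : measurableType d) (R : realType) (mu : {measure set T -> \bar R}).

Lemma Rintegral_dominated_cvg (f : nat -> T -> R) (f0 s : T -> R) :
  (forall n, measurable_fun setT (f n)) -> measurable_fun setT f0 ->
  (forall x, f n x @[n --> \oo] --> f0 x) -> mu.-integrable setT (EFin \o s) ->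
  (forall n x, `|f n x| <= s x) -> (forall x, `|f0 x| <= s x) ->
  \int[mu]_x f n x @[n --> \oo] --> \int[mu]_x f0 x.
Proof.
move=> mf mf0 f_f0 s_int f_le f0_le.
have f0_int : mu.-integrable setT (EFin \o f0).
  apply: (le_integrable measurableT _ _ s_int); first exact/measurable_EFinP.
  by move=> x _ /=; rewrite lee_fin (le_trans (f0_le x)) // ler_norm.
have := @dominated_cvg _ _ _ mu setT measurableT (fun n x => (f n x)%:E) (EFin \o f0)
  (EFin \o s).
rewrite /Rintegral -(fineK (integrable_fin_num measurableT f0_int)) => dct.
apply: (fine_cvg (f := fun n => (\int[mu]_x (f n x)%:E)%E)); apply: dct => //.
- by move=> n; exact/measurable_EFinP.
- by move=> x _; apply: cvg_EFin; [exact: nearW | exact: f_f0].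
- by move=> n x _ /=; rewrite lee_fin.
Qed.

Lemma Rintegral_sum (I : Type) (r : seq I) (F : I -> T -> R) :
  (forall i, mu.-integrable setT (EFin \o F i)) ->
  \int[mu]_x (\sum_(i <- r) F i x) = \sum_(i <- r) \int[mu]_x F i x.
Proof.
move=> F_int; rewrite /Rintegral; under eq_integral do rewrite -sumEFin.
rewrite integral_sum // -EFin_sum_fine => [//|i _].
by have := integrable_fin_num measurableT (F_int i).
Qed.

End Rintegral_lemmas.

Section kernel_potential.
Context (R : realType) (N : nat) (mu : {measure set BorelRN R N -> \bar R}).
Context (K : 'rV[R]_N -> 'rV[R]_N -> R).
Hypothesis K_cvg : forall (u v : nat -> 'rV[R]_N) (a b : 'rV[R]_N),
  u n @[n --> \oo] --> a -> v n @[n --> \oo] --> b ->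
  K (u n) (v n) @[n --> \oo] --> K a b.
Hypothesis K_CS : forall x y, `|K x y| <= Num.sqrt (K x x) * Num.sqrt (K y y).
Local Notation sq x := (Num.sqrt (K x x)).

Lemma K_continuousl y : continuous (K ^~ y).
Proof. by move=> x; apply: sequentially_continuous => u ux; apply: K_cvg ux (cvg_cst _). Qed.

Lemma sqrtK_continuous : continuous (fun x => sq x).
Proof.
move=> x; apply: sequentially_continuous => u ux.
exact: cvg_comp (K_cvg ux ux) (@sqrt_continuous _ _).
Qed.

Lemma integrable_sqrtK : (\int[mu]_x (sq x)%:E < +oo)%E ->
  mu.-integrable setT (EFin \o (fun x : BorelRN R N => sq x)).
Proof.
move=> sq_fin; apply/integrableP; split.
  by apply/measurable_EFinP; apply: continuous_measurable_BorelRN; exact: sqrtK_continuous.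
by under eq_integral => x _ do rewrite abse_EFin (ger0_norm (sqrtr_ge0 _)).
Qed.

Hypothesis sqrtK_int : mu.-integrable setT (EFin \o (fun x : BorelRN R N => sq x)).

Lemma integrable_le_sqrtK (f : 'rV[R]_N -> R) (c : R) : continuous f ->
  (forall x, `|f x| <= c * sq x) -> mu.-integrable setT (EFin \o (f : BorelRN R N -> R)).
Proof.
move=> f_cont f_le; apply: (le_integrable measurableT _ _ (integrableZl measurableT c sqrtK_int)).
  by apply/measurable_EFinP; exact: continuous_measurable_BorelRN.
by move=> x _ /=; rewrite lee_fin (le_trans (f_le x)) // ler_norm.
Qed.

Lemma integrable_K y : mu.-integrable setT (EFin \o (K ^~ y : BorelRN R N -> R)).
Proof.
apply: (integrable_le_sqrtK (c := sq y)); first exact: K_continuousl.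
by move=> x; rewrite mulrC.
Qed.

Definition potential (y : 'rV[R]_N) : R := \int[mu]_x (K x y : R).

Lemma potential_le : exists S, forall y, `|potential y| <= S * sq y.
Proof.
exists (\int[mu]_x sq x) => y.
rewrite /potential (le_trans (le_normr_Rintegral measurableT (integrable_K y))) //.
rewrite -RintegralZr //; apply: le_Rintegral => //.
- exact: integrable_norm (integrable_K y).
- apply: (integrable_le_sqrtK (c := sq y)).
    move=> x; apply: (cvgM (FF := nbhs_filter x)); last exact: cvg_cst.
    exact: sqrtK_continuous.
  by move=> x; rewrite normrM !ger0_norm ?sqrtr_ge0 // mulrC.
Qed.

Lemma potential_cvg (u : nat -> 'rV[R]_N) (y : 'rV[R]_N) : u n @[n --> \oo] --> y ->
  potential (u n) @[n --> \oo] --> potential y.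
Proof.
move=> uy; have sq_u : sq (u n) @[n --> \oo] --> sq y := cvg_comp _ _ uy (@sqrtK_continuous y).
have [M [_ M_bnd]] := cvg_bounded _ _ sq_u.
have [n0 _ sq_le] := M_bnd (`|M| + 1) (ltr_pwDr ltr01 (ler_norm M)).
pose B := `|M| + 1 + sq y.
have sq_le_B n : sq (u (n + n0)) <= B.
  have := sq_le (n + n0)%N (leq_addl _ _); rewrite /= ger0_norm ?sqrtr_ge0 // => le.
  by rewrite /B; have := sqrtr_ge0 (K y y); lra.
have B_ge0 : 0 <= B by apply: le_trans (sq_le_B 0%N); exact: sqrtr_ge0.
have uy0 : u (n + n0) @[n --> \oo] --> y by rewrite (cvg_shiftn n0 u).
suff : potential (u (n + n0)) @[n --> \oo] --> potential y.
  by rewrite (cvg_shiftn n0 (fun n => potential (u n))).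
rewrite /potential; apply: (@Rintegral_dominated_cvg _ _ _ mu (fun n x => K x (u (n + n0)))
  (K ^~ y) (fun x => sq x * B)).
- by move=> n; apply: continuous_measurable_BorelRN; exact: K_continuousl.
- by apply: continuous_measurable_BorelRN; exact: K_continuousl.
- by move=> x; exact: K_cvg (cvg_cst x) uy0.
- apply: (integrable_le_sqrtK (c := B)).
    move=> x; apply: (cvgM (FF := nbhs_filter x)); last exact: cvg_cst.
    exact: sqrtK_continuous.
  by move=> x; rewrite mulrC ger0_norm // mulr_ge0 ?sqrtr_ge0.
- by move=> n x; rewrite (le_trans (K_CS _ _)) // ler_wpM2l ?sqrtr_ge0.
- move=> x; rewrite (le_trans (K_CS _ _)) // ler_wpM2l ?sqrtr_ge0 // /B.
  by have := normr_ge0 M; lra.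
Qed.

Hypothesis K_row_bounded : forall x, exists b, forall y, `|K x y| <= b.

(* The points u n may escape to infinity; still t n * K x (u n) -> 0 for each x
   because K x is bounded, and T * sq x dominates. *)
Lemma potential_vanish (t : nat -> R) (u : nat -> 'rV[R]_N) (T : R) :
  t n @[n --> \oo] --> 0 -> (forall n, 0 <= t n) ->
  (forall n, t n * sq (u n) <= T) -> t n * potential (u n) @[n --> \oo] --> 0.
Proof.
move=> t0 t_ge0 tT.
have T_ge0 : 0 <= T by apply: le_trans (tT 0%N); rewrite mulr_ge0 ?sqrtr_ge0.
have -> : (fun n => t n * potential (u n)) =
    (fun n => \int[mu]_x (t n * K x (u n) : R)).
  by apply: funext => n; rewrite /potential RintegralZl //; exact: integrable_K.
rewrite -[0](mul0r (fine (mu setT))) -(Rintegral_cst mu measurableT).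
apply: (@Rintegral_dominated_cvg _ _ _ mu (fun n x => t n * K x (u n)) (cst 0)
  (fun x => sq x * T)).
- move=> n; apply: continuous_measurable_BorelRN => x.
  by apply: (cvgM (FF := nbhs_filter x)); [exact: cvg_cst | exact: K_continuousl].
- exact: measurable_cst.
- move=> x; have [b b_bnd] := K_row_bounded x.
  apply: (@squeeze_cvgr _ _ _ _ (fun n => - (t n * b)) (fun n => t n * b)).
  + apply: nearW => n; have := b_bnd (u n); rewrite ler_norml => /andP[? ?].
    by have := t_ge0 n => tn_ge0; apply/andP; split; nra.
  + by rewrite -oppr0 -(mul0r b); apply: cvgN; apply: cvgM => //; exact: cvg_cst.
  + by rewrite -(mul0r b); apply: cvgM => //; exact: cvg_cst.
- apply: (integrable_le_sqrtK (c := T)).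
    move=> x; apply: (cvgM (FF := nbhs_filter x)); last exact: cvg_cst.
    exact: sqrtK_continuous.
  by move=> x; rewrite mulrC ger0_norm // mulr_ge0 ?sqrtr_ge0.
- move=> n x; rewrite normrM ger0_norm // (le_trans (ler_wpM2l (t_ge0 n) (K_CS _ _))) //.
  by rewrite mulrCA ler_wpM2l ?sqrtr_ge0.
- by move=> x; rewrite normr0 mulr_ge0 ?sqrtr_ge0.
Qed.

End kernel_potential.

Definition mean_embedding (R : realType) (N : nat) (Pp Pn : {measure set BorelRN R N -> \bar R})
    (K : BorelRN R N -> BorelRN R N -> R) (y : BorelRN R N) : R :=
  sint Pp Pn (K ^~ y).

Section mean_embedding_properties.
Context (R : realType) (N : nat) (Pp Pn : {measure set BorelRN R N -> \bar R}).
Context (K : 'rV[R]_N -> 'rV[R]_N -> R).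
Hypothesis K_cvg : forall (u v : nat -> 'rV[R]_N) (a b : 'rV[R]_N),
  u n @[n --> \oo] --> a -> v n @[n --> \oo] --> b ->
  K (u n) (v n) @[n --> \oo] --> K a b.
Hypothesis K_CS : forall x y, `|K x y| <= Num.sqrt (K x x) * Num.sqrt (K y y).
Hypothesis K_row_bounded : forall x, exists b, forall y, `|K x y| <= b.
Local Notation sq x := (Num.sqrt (K x x)).
Hypothesis sqrtK_int_p : Pp.-integrable setT (EFin \o (fun x : BorelRN R N => sq x)).
Hypothesis sqrtK_int_n : Pn.-integrable setT (EFin \o (fun x : BorelRN R N => sq x)).
Local Notation g := (mean_embedding Pp Pn K).

Lemma mean_embedding_le : exists G, forall y, `|g y| <= G * sq y.
Proof.
have [Sp Sp_le] := potential_le K_cvg K_CS sqrtK_int_p.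
have [Sn Sn_le] := potential_le K_cvg K_CS sqrtK_int_n.
exists (Sp + Sn) => y; rewrite (le_trans (ler_normB _ _)) // mulrDl.
exact: lerD (Sp_le y) (Sn_le y).
Qed.

Lemma mean_embedding_cvg (u : nat -> 'rV[R]_N) (y : 'rV[R]_N) :
  u n @[n --> \oo] --> y -> g (u n) @[n --> \oo] --> g y.
Proof.
move=> uy; exact: cvgB (potential_cvg K_cvg K_CS sqrtK_int_p uy)
  (potential_cvg K_cvg K_CS sqrtK_int_n uy).
Qed.

Lemma mean_embedding_vanish (t : nat -> R) (u : nat -> 'rV[R]_N) (T : R) :
  t n @[n --> \oo] --> 0 -> (forall n, 0 <= t n) ->
  (forall n, t n * sq (u n) <= T) -> t n * g (u n) @[n --> \oo] --> 0.
Proof.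
move=> t0 t_ge0 tT.
have -> : (fun n => t n * g (u n)) =
    (fun n => t n * potential Pp K (u n) - t n * potential Pn K (u n)).
  by apply: funext => n; rewrite -mulrBr.
rewrite -[0]subr0; exact: cvgB
  (potential_vanish K_cvg K_CS sqrtK_int_p K_row_bounded t0 t_ge0 tT)
  (potential_vanish K_cvg K_CS sqrtK_int_n K_row_bounded t0 t_ge0 tT).
Qed.

Lemma integrable_mean_embedding (mu : {measure set BorelRN R N -> \bar R}) :
  mu.-integrable setT (EFin \o (fun x : BorelRN R N => sq x)) ->
  mu.-integrable setT (EFin \o g).
Proof.
move=> sqrtK_int; have [G G_le] := mean_embedding_le.
apply: (integrable_le_sqrtK sqrtK_int _ G_le) => y.
by apply: sequentially_continuous => u uy; exact: mean_embedding_cvg.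
Qed.

End mean_embedding_properties.

Lemma Rintegral_kernel_combination d (T : measurableType d) (R : realType)
    (mu : {measure set T -> \bar R}) (Q : nat) (K : T -> T -> R) (a : 'I_Q -> R)
    (x : 'I_Q -> T) (g : T -> R) :
  (forall z, mu.-integrable setT (EFin \o K ^~ z)) -> mu.-integrable setT (EFin \o g) ->
  \int[mu]_y (\sum_p a p * K y (x p) - g y) = \sum_p a p * \int[mu]_y K y (x p) - \int[mu]_y g y.
Proof.
move=> K_int g_int.
have aK_int p : mu.-integrable setT (EFin \o (fun y => a p * K y (x p))).
  by have := integrableZl measurableT (a p) (K_int (x p)); apply: eq_integrable.
have sum_int : mu.-integrable setT (EFin \o (fun y => \sum_p a p * K y (x p))).
  have := @integrable_sum _ _ _ mu setT measurableT _ (index_enum 'I_Q) xpredT _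
    (fun p _ => aK_int p).
  by apply: eq_integrable => // y _; rewrite /= sumEFin.
rewrite RintegralB // Rintegral_sum //; congr (_ - _); apply: eq_bigr => p _.
exact: RintegralZl.
Qed.

Lemma dist2_diffE (R : realType) (N Q : nat) (h : BorelRN R N -> BorelRN R N -> R)
    (z0 : BorelRN R N) (a : 'I_Q -> R) (x : 'I_Q -> BorelRN R N)
    (Pp Pn : {measure set BorelRN R N -> \bar R}) :
  let K := kz0 h z0 in let g := mean_embedding Pp Pn K in
  (forall x y, K x y = K y x) ->
  (forall z, Pp.-integrable setT (EFin \o K ^~ z)) ->
  (forall z, Pn.-integrable setT (EFin \o K ^~ z)) ->
  Pp.-integrable setT (EFin \o g) -> Pn.-integrable setT (EFin \o g) ->
  dist2_diff h z0 a x Pp Pn = energy K g a x + sint Pp Pn g.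
Proof.
move=> K g K_sym Kp_int Kn_int gp_int gn_int.
pose F y := \sum_p a p * K y (x p) - g y.
have -> : dist2_diff h z0 a x Pp Pn = \sum_q a q * F (x q) - sint Pp Pn F.
  rewrite /dist2_diff /sint_diff /F; congr (_ - _).
    by apply: eq_bigr => q _; congr (_ * (_ - _)); apply: eq_bigr => p _; rewrite K_sym.
  by congr (_ - _); apply: eq_Rintegral => y _; congr (_ - _); apply: eq_bigr => p _; rewrite K_sym.
rewrite /sint /F !Rintegral_kernel_combination // /energy.
have -> : \sum_q a q * (\sum_p a p * K (x q) (x p) - g (x q)) =
    \sum_q \sum_p a q * a p * K (x p) (x q) - \sum_q a q * g (x q).
  rewrite -sumrB; apply: eq_bigr => q _; rewrite mulrBr mulr_sumr; congr (_ - _).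
  by apply: eq_bigr => p _; rewrite mulrA K_sym.
have : \sum_p a p * \int[Pp]_y K y (x p) - \sum_p a p * \int[Pn]_y K y (x p) =
    \sum_q a q * g (x q).
  by rewrite -sumrB; apply: eq_bigr => p _; rewrite -mulrBr.
lra.
Qed.

Theorem proposition2 (R : realType) (N Q : nat) (hQ : (1 <= Q)%N)
    (h : BorelRN R N -> BorelRN R N -> R)
    (Pp Pn : {finite_measure set BorelRN R N -> \bar R}) (z0 : BorelRN R N) :
  (forall x y, 0 <= h x y) ->
  cond_neg_def_kernel h ->
  mutually_singular Pp Pn ->
  in_embedding h z0 Pp Pn ->
  0 < smass Pp Pn ->
  (* 1. h is continuous on X x X *)
  continuous (fun p : 'rV[R]_N * 'rV[R]_N => h p.1 p.2) ->
  (* 2. an associated positive definite kernel k *)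
  (exists k : 'rV[R]_N -> 'rV[R]_N -> R,
     [/\ pos_def_kernel k,
         (forall x y, h x y = k x x + k y y - 2 * k x y),
         (forall M : R, exists r : R, forall x, r < `|x| -> M < k x x),
         (forall y, exists b : R, forall x, `|k x y| <= b) &
     (* 3. k is bounded from below *)
         (exists CL : R, forall x y, CL <= k x y)]) ->
  exists (a : 'I_Q -> R) (x : 'I_Q -> BorelRN R N),
    [/\ (forall q, 0 <= a q), \sum_(q < Q) a q = smass Pp Pn &
        forall (b : 'I_Q -> R) (y : 'I_Q -> BorelRN R N),
          (forall q, 0 <= b q) -> \sum_(q < Q) b q = smass Pp Pn ->
          dist2_diff h z0 a x Pp Pn <= dist2_diff h z0 b y Pp Pn].
Proof.
move=> _ _ _ [emb_p emb_n] m_gt0 h_cont [k [k_pd hk k_coer k_bnd k_lb]].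
have K_cvg := kz0_cvg (z0 := z0) h_cont; have K_CS := kz0_Cauchy_Schwarz z0 k_pd hk.
have sq_p := integrable_sqrtK K_cvg emb_p; have sq_n := integrable_sqrtK K_cvg emb_n.
have [C [C_le0 K_ge]] := kz0_lbound hk k_lb (k_bnd z0).
have [G G_le] := mean_embedding_le K_cvg K_CS sq_p sq_n.
have [a [x [[a_ge0 a_sum] a_min]]] := energy_attains_min hQ (ltW m_gt0)
  (kz0_diag_ge0 z0 k_pd hk) C_le0 K_ge (kz0_coercive hk (k_bnd z0) k_coer) K_cvg G_le
  (mean_embedding_cvg K_cvg K_CS sq_p sq_n)
  (mean_embedding_vanish K_cvg K_CS (kz0_row_bounded z0 k_pd hk k_bnd) sq_p sq_n).
have dist2E (c : 'I_Q -> R) (w : 'I_Q -> BorelRN R N) := dist2_diffE c w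
  (kz0C z0 k_pd hk) (integrable_K K_cvg K_CS sq_p)
  (integrable_K K_cvg K_CS sq_n)
  (integrable_mean_embedding K_cvg K_CS sq_p sq_n sq_p)
  (integrable_mean_embedding K_cvg K_CS sq_p sq_n sq_n).
exists a, x; split => // b y b_ge0 b_sum.
by rewrite !dist2E lerD2r; apply: a_min.
Qed.
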